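(* Let $L,W,l>0$, $\Omega_2=(-l,L+l)\times(-l,W+l)$, and let $\Omega_3\subseteq\mathbb{R}^2$ be a bounded open set with smooth boundary such that $\overline{\Omega}_2\subseteq\Omega_3$. Let $\chi\in\mathcal{C}^\infty_0(\overline{\Omega}_3)$ be a smooth cutoff function with $\chi=1$ on $\overline{\Omega}_2$. For $M>0$ let $\gamma\in\mathcal{C}^\infty([0,1];[0,\infty))$ satisfy $\operatorname{supp}\gamma\subseteq(0,1)$ and $\gamma(t)=M$ for all $t\in[1/4,3/4]$; set $\mathbf{y}^*(\mathbf{x},t)=(\gamma(t)\chi(\mathbf{x}),0)'$ for $(\mathbf{x},t)\in\overline{\Omega}_3\times[0,1]$, and let $\mathcal{Y}(\mathbf{x},s,t)$ be the flow solving $\frac{d}{dt}\mathcal{Y}(\mathbf{x},s,t)=\mathbf{y}^*(\mathcal{Y}(\mathbf{x},s,t),t)$, $\mathcal{Y}(\mathbf{x},s,s)=\mathbf{x}$. Then, if $M>0$ is chosen large enough, $\mathcal{Y}(\mathbf{x},0,1)\notin\overline{\Omega}_2$ for all $\mathbf{x}\in\overline{\Omega}_2$. *)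

From Stdlib Require Import Reals.
From Coquelicot Require Import Coquelicot.
Open Scope R_scope.

Definition pd1 (f : R * R -> R) (p : R * R) : R :=
  Derive (fun t => f (t, snd p)) (fst p).
Definition pd2 (f : R * R -> R) (p : R * R) : R :=
  Derive (fun t => f (fst p, t)) (snd p).

Fixpoint Ck2 (k : nat) (f : R * R -> R) : Prop :=
  match k with
  | O => forall p, continuous f p
  | S k' =>
      (forall p, ex_derive (fun t => f (t, snd p)) (fst p)) /\
      (forall p, ex_derive (fun t => f (fst p, t)) (snd p)) /\
      Ck2 k' (pd1 f) /\ Ck2 k' (pd2 f)
  end.

Definition smooth2 (f : R * R -> R) : Prop := forall k, Ck2 k f.

Definition smooth_on_01 (g : R -> R) : Prop :=
  forall n t, 0 < t < 1 -> ex_derive_n g n t.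

Definition bounded2 (A : R * R -> Prop) : Prop :=
  exists B, forall p, A p -> Rabs (fst p) <= B /\ Rabs (snd p) <= B.

Definition closure2 (A : R * R -> Prop) (p : R * R) : Prop :=
  forall P, locally p P -> exists q, A q /\ P q.

(* smooth boundary, via a smooth defining function with nonvanishing
   gradient on its zero set: A = {rho < 0}, boundary A = {rho = 0}. *)
Definition smooth_boundary (A : R * R -> Prop) : Prop :=
  exists rho : R * R -> R,
    smooth2 rho /\
    (forall p, A p <-> rho p < 0) /\
    (forall p, rho p = 0 -> pd1 rho p <> 0 \/ pd2 rho p <> 0).

Definition Omega2 (L W l : R) (p : R * R) : Prop :=
  -l < fst p < L + l /\ -l < snd p < W + l.
Definition Omega2bar (L W l : R) (p : R * R) : Prop :=
  -l <= fst p <= L + l /\ -l <= snd p <= W + l.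

Definition smooth_compact_support_in (A : R * R -> Prop) (chi : R * R -> R) : Prop :=
  smooth2 chi /\
  exists K : R * R -> Prop,
    closed K /\ bounded2 K /\ (forall p, K p -> A p) /\
    (forall p, ~ K p -> chi p = 0).

(* Y is the flow of y*(x,t) = (gamma t * chi x, 0)' on closure(Omega3) x [0,1]:
   for each x, s, the map t |-> Y x s t is continuous on [0,1],
   differentiable on (0,1) and solves the ODE there, with Y x s s = x. *)
Definition is_flow (Omega3 : R * R -> Prop) (gamma : R -> R) (chi : R * R -> R)
    (Y : R * R -> R -> R -> R * R) : Prop :=
  forall x s, closure2 Omega3 x -> 0 <= s <= 1 ->
    Y x s s = x /\
    (forall t, 0 <= t <= 1 -> continuous (fun u => fst (Y x s u)) t /\
                            continuous (fun u => snd (Y x s u)) t) /\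
    (forall t, 0 < t < 1 ->
       is_derive (fun u => fst (Y x s u)) t (gamma t * chi (Y x s t)) /\
       is_derive (fun u => snd (Y x s u)) t 0).

(** The flow only moves points horizontally, with speed [gamma t * chi].  Since
    [chi = 1 > 0] on the closed rectangle, the speed is nonnegative near its left
    and right edges, so a trajectory starting in the rectangle never leaves it to
    the left, and a trajectory ending in it was never to the right of it.  Hence a
    trajectory starting and ending in the rectangle stays there, so during
    [1/4 <= t <= 3/4] it moves with speed exactly [M]; for [M > 2 (L + 2 l)] it
    would travel further than the width [L + 2 l] of the rectangle. *)

From Stdlib Require Import Reals Lra.
From Coquelicot Require Import Coquelicot.
Open Scope R_scope.

Lemma continuous_Rabs_lt (f : R -> R) (t e : R) :
  continuous f t -> 0 < e ->
  exists d, 0 < d /\ forall u, Rabs (u - t) < d -> Rabs (f u - f t) < e.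
Proof.
  intros Hf He.
  destruct (Hf _ (locally_ball (f t) (mkposreal e He))) as [d Hd].
  exists d; split; [apply cond_pos | intros u Hu; exact (Hd u Hu)].
Qed.

Lemma MVT_le (f D : R -> R) (a b : R) : a <= b ->
  (forall t, a <= t <= b -> continuous f t) ->
  (forall t, a < t < b -> is_derive f t (D t)) ->
  exists xi, a <= xi <= b /\ f b - f a = D xi * (b - a).
Proof.
  intros Hab Hc Hd.
  destruct (MVT_gen f a b D) as [xi Hxi]; rewrite Rmin_left, Rmax_right in *; try lra.
  - exact Hd.
  - intros t Ht; apply continuity_pt_filterlim, Hc, Ht.
  - now exists xi.
Qed.

Lemma derive0_const (f : R -> R) (a b : R) :
  (forall t, a <= t <= b -> continuous f t) ->
  (forall t, a < t < b -> is_derive f t 0) ->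
  forall t, a <= t <= b -> f t = f a.
Proof.
  intros Hc Hd t Ht.
  destruct (MVT_le f (fun _ => 0) a t) as [xi [_ Hxi]]; try lra.
  - intros u Hu; apply Hc; lra.
  - intros u Hu; apply Hd; lra.
Qed.

Section Barrier.

Variables (f D : R -> R) (a b c r : R).
Hypothesis Hab : a <= b.
Hypothesis Hr : 0 < r.
Hypothesis Hf_cont : forall t, a <= t <= b -> continuous f t.
Hypothesis Hf_deriv : forall t, a < t < b -> is_derive f t (D t).
Hypothesis HD_band : forall t, a <= t <= b -> Rabs (f t - c) < r -> 0 <= D t.

Lemma first_time_le : c < f a -> f b <= c ->
  exists s, a < s <= b /\ f s <= c /\ forall u, a <= u < s -> c < f u.
Proof.
  intros Ha Hb.
  set (E := fun t => a <= t <= b /\ forall u, a <= u <= t -> c < f u).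
  destruct (completeness E) as [s [Hs_ub Hs_lub]].
  { exists b; intros t Et; apply Et. }
  { exists a; split; [lra | intros u Hu; replace u with a by lra; exact Ha]. }
  assert (Has : a <= s).
  { apply Hs_ub; split; [lra | intros u Hu; replace u with a by lra; exact Ha]. }
  assert (Hsb : s <= b) by (apply Hs_lub; intros t Et; apply Et).
  assert (Hbefore : forall u, a <= u < s -> c < f u).
  { intros u Hu; apply Rnot_le_lt; intros Hfu.
    enough (s <= u) by lra.
    apply Hs_lub; intros t [_ Ht]; apply Rnot_lt_le; intros Hut.
    specialize (Ht u ltac:(lra)); lra. }
  assert (Hfs : f s <= c).
  { apply Rnot_lt_le; intros Hcs.
    destruct (continuous_Rabs_lt f s (f s - c) (Hf_cont s (conj Has Hsb)))
      as [e [He Hnear]]; [lra |].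
    assert (Et : E (Rmin b (s + e / 2))).
    { split; [split; [apply Rmin_glb; lra | apply Rmin_l] |].
      intros u Hu; destruct (Rlt_or_le u s) as [Hus | Hsu]; [apply Hbefore; lra |].
      assert (Hu' : u <= s + e / 2) by (pose proof (Rmin_r b (s + e / 2)); lra).
      specialize (Hnear u ltac:(apply Rabs_def1; lra)); apply Rabs_def2 in Hnear; lra. }
    assert (Hbs : b = s).
    { apply Hs_ub in Et; destruct (Rle_lt_dec b (s + e / 2)) as [Hle | Hlt];
        [rewrite Rmin_left in Et | rewrite Rmin_right in Et]; lra. }
    subst; lra. }
  exists s; split; [split; [destruct Has as [? | ->]; [assumption | lra] | exact Hsb] |].
  split; [exact Hfs | exact Hbefore].
Qed.

Lemma barrier_lt : c < f a -> c < f b.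
Proof.
  intros Ha; apply Rnot_le_lt; intros Hb.
  destruct (first_time_le Ha Hb) as [s [[Has Hsb] [Hfs Hbefore]]].
  (* Just before [s], [f] lies in the band above [c], where it is nondecreasing. *)
  destruct (continuous_Rabs_lt f s (r / 2) (Hf_cont s ltac:(lra))) as [e [He Hnear]]; [lra |].
  set (u := Rmax a (s - e / 2)).
  assert (Hu : a <= u < s /\ s - e / 2 <= u)
    by (unfold u; split; [split; [apply Rmax_l | apply Rmax_lub_lt; lra] | apply Rmax_r]).
  assert (Hfu : c < f u) by (apply Hbefore; lra).
  assert (Hclose : forall v, u <= v <= s -> Rabs (f v - f s) < r / 2)
    by (intros v Hv; apply Hnear, Rabs_def1; lra).
  destruct (MVT_le f D u s) as [xi [Hxi Hmvt]]; try lra.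
  - intros v Hv; apply Hf_cont; lra.
  - intros v Hv; apply Hf_deriv; lra.
  - assert (HDxi : 0 <= D xi).
    { apply HD_band; [lra |].
      pose proof (Hclose xi Hxi) as H1; pose proof (Hclose u ltac:(lra)) as H2.
      apply Rabs_def2 in H1; apply Rabs_def2 in H2; apply Rabs_def1; lra. }
    pose proof (Rmult_le_pos _ _ HDxi (Rlt_le 0 (s - u) ltac:(lra))); lra.
Qed.

End Barrier.

Lemma barrier_le (f D : R -> R) (a b c r : R) :
  a <= b -> 0 < r ->
  (forall t, a <= t <= b -> continuous f t) ->
  (forall t, a < t < b -> is_derive f t (D t)) ->
  (forall t, a <= t <= b -> Rabs (f t - c) < r -> 0 <= D t) ->
  c <= f a -> c <= f b.
Proof.
  intros Hab Hr Hc Hd Hband Ha; apply Rnot_lt_le; intros Hb.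
  set (c' := Rmax (f b) (c - r / 2)).
  assert (Hc' : f b <= c' /\ c - r / 2 <= c' < c)
    by (unfold c'; split; [apply Rmax_l | split; [apply Rmax_r | apply Rmax_lub_lt]]; lra).
  enough (c' < f b) by lra.
  apply (barrier_lt f D a b c' (r / 2)); try assumption; try lra.
  intros t Ht Hft; apply Hband; [exact Ht |].
  apply Rabs_def2 in Hft; apply Rabs_def1; lra.
Qed.

Lemma continuous_pos_row (g : R * R -> R) (c y : R) :
  continuous g (c, y) -> 0 < g (c, y) ->
  exists r, 0 < r /\ forall u, Rabs (u - c) < r -> 0 < g (u, y).
Proof.
  intros Hg Hpos.
  destruct (Hg _ (locally_ball (g (c, y)) (mkposreal _ Hpos))) as [r Hr].
  exists r; split; [apply cond_pos |].
  intros u Hu; specialize (Hr (u, y) (conj Hu (ball_center _ _))).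
  change (Rabs (g (u, y) - g (c, y)) < g (c, y)) in Hr.
  apply Rabs_def2 in Hr; lra.
Qed.

Section HorizontalTrajectory.

Variables (L W l y : R) (chi : R * R -> R) (gamma f : R -> R).
Hypothesis Hwidth : - l <= L + l.
Hypothesis Hy : - l <= y <= W + l.
Hypothesis Hchi_cont : forall p, continuous chi p.
Hypothesis Hchi1 : forall p, Omega2bar L W l p -> chi p = 1.
Hypothesis Hgamma : forall t, 0 <= t <= 1 -> 0 <= gamma t.
Hypothesis Hf_cont : forall t, 0 <= t <= 1 -> continuous f t.
Hypothesis Hf_deriv : forall t, 0 < t < 1 -> is_derive f t (gamma t * chi (f t, y)).

Lemma speed_nonneg_near (c : R) : - l <= c <= L + l ->
  exists r, 0 < r /\ forall t, 0 <= t <= 1 -> Rabs (f t - c) < r ->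
    0 <= gamma t * chi (f t, y).
Proof.
  intros Hc.
  assert (Hchi_c : chi (c, y) = 1) by (apply Hchi1; split; simpl; lra).
  destruct (continuous_pos_row chi c y (Hchi_cont _)) as [r [Hr Hpos]]; [lra |].
  exists r; split; [exact Hr |].
  intros t Ht Hft; apply Rmult_le_pos; [apply Hgamma, Ht | apply Rlt_le, Hpos, Hft].
Qed.

Lemma trajectory_in_strip : - l <= f 0 -> f 1 <= L + l ->
  forall t, 0 <= t <= 1 -> - l <= f t <= L + l.
Proof.
  intros H0 H1 t Ht.
  destruct (speed_nonneg_near (- l)) as [r1 [Hr1 Hband1]]; [lra |].
  destruct (speed_nonneg_near (L + l)) as [r2 [Hr2 Hband2]]; [lra |].
  split.
  - apply (barrier_le f (fun u => gamma u * chi (f u, y)) 0 t (- l) r1); try lra.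
    + intros u Hu; apply Hf_cont; lra.
    + intros u Hu; apply Hf_deriv; lra.
    + intros u Hu; apply Hband1; lra.
  - apply Rnot_lt_le; intros Hout.
    enough (L + l < f 1) by lra.
    apply (barrier_lt f (fun u => gamma u * chi (f u, y)) t 1 (L + l) r2); try lra.
    + intros u Hu; apply Hf_cont; lra.
    + intros u Hu; apply Hf_deriv; lra.
    + intros u Hu; apply Hband2; lra.
Qed.

Lemma trajectory_escapes (M a b : R) : 0 <= a <= b -> b <= 1 ->
  (forall t, a <= t <= b -> gamma t = M) -> L + 2 * l < M * (b - a) ->
  - l <= f 0 -> L + l < f 1.
Proof.
  intros Ha Hb HgM Hfar H0; apply Rnot_le_lt; intros H1.
  pose proof (trajectory_in_strip H0 H1) as Hstrip.
  destruct (MVT_le f (fun t => gamma t * chi (f t, y)) a b) as [xi [Hxi Hmvt]]; try lra.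
  - intros t Ht; apply Hf_cont; lra.
  - intros t Ht; apply Hf_deriv; lra.
  - rewrite HgM, Hchi1 in Hmvt by (try split; simpl; try apply Hstrip; lra).
    pose proof (Hstrip a ltac:(lra)); pose proof (Hstrip b ltac:(lra)); lra.
Qed.

End HorizontalTrajectory.

Lemma subset_closure2 (A : R * R -> Prop) (p : R * R) : A p -> closure2 A p.
Proof. intros Hp P HP; exists p; split; [exact Hp | exact (locally_singleton _ _ HP)]. Qed.

Lemma flow_horizontal (Omega3 : R * R -> Prop) (gamma : R -> R) (chi : R * R -> R)
    (Y : R * R -> R -> R -> R * R) (x : R * R) :
  is_flow Omega3 gamma chi Y -> closure2 Omega3 x ->
  forall t, 0 <= t <= 1 -> Y x 0 t = (fst (Y x 0 t), snd x).
Proof.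
  intros Hflow Hx t Ht.
  destruct (Hflow x 0 Hx ltac:(lra)) as [HY0 [Hc Hd]].
  assert (Hsnd : snd (Y x 0 t) = snd (Y x 0 0)).
  { apply (derive0_const (fun u => snd (Y x 0 u)) 0 1); try assumption.
    - intros u Hu; apply Hc, Hu.
    - intros u Hu; apply Hd, Hu. }
  rewrite HY0 in Hsnd; rewrite <- Hsnd; now destruct (Y x 0 t).
Qed.

Theorem lemma2p1 (L W l : R) (Omega3 : R * R -> Prop) (chi : R * R -> R) :
  0 < L -> 0 < W -> 0 < l ->
  open Omega3 -> bounded2 Omega3 -> smooth_boundary Omega3 ->
  (forall p, Omega2bar L W l p -> Omega3 p) ->
  smooth_compact_support_in Omega3 chi ->
  (forall p, Omega2bar L W l p -> chi p = 1) ->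
  exists M0 : R, 0 < M0 /\
    forall (M : R) (gamma : R -> R) (Y : R * R -> R -> R -> R * R),
      M0 <= M ->
      smooth_on_01 gamma ->
      (forall t, 0 <= t <= 1 -> 0 <= gamma t) ->
      (exists a b, 0 < a /\ a <= b /\ b < 1 /\
         forall t, 0 <= t <= 1 -> (t < a \/ b < t) -> gamma t = 0) ->
      (forall t, 1/4 <= t <= 3/4 -> gamma t = M) ->
      is_flow Omega3 gamma chi Y ->
      forall x, Omega2bar L W l x -> ~ Omega2bar L W l (Y x 0 1).
Proof.
  intros HL HW Hl _ _ _ H23 [Hsmooth _] Hchi1.
  exists (2 * (L + 2 * l) + 1); split; [lra |].
  intros M gamma Y HM _ Hgamma _ HgM Hflow x Hx HY1.
  pose proof (subset_closure2 Omega3 x (H23 x Hx)) as Hcl.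
  pose proof (flow_horizontal Omega3 gamma chi Y x Hflow Hcl) as Hhor.
  destruct (Hflow x 0 Hcl ltac:(lra)) as [HY0 [Hc Hd]].
  enough (L + l < fst (Y x 0 1)) by (destruct HY1; lra).
  destruct Hx as [Hx1 Hx2].
  refine (trajectory_escapes L W l (snd x) chi gamma (fun u => fst (Y x 0 u)) _ Hx2
    (Hsmooth 0%nat) Hchi1 Hgamma _ _ M (1/4) (3/4) _ _ HgM _ _); try lra.
  - intros t Ht; apply Hc, Ht.
  - intros t Ht; rewrite <- Hhor by lra; apply Hd, Ht.
  - simpl; rewrite HY0; lra.
Qed.
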